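(* Let $p$ be a prime and $G$ a $p$-group containing a normal abelian subgroup $A$ such that $C_G(A)$ has finite index in $G$. Assume that $A$ contains a $G$-invariant divisible Chernikov subgroup $D$. Then $A$ contains a $G$-invariant subgroup $S$ such that $A=SD$ and $S\cap D$ is finite. *)

(* Possibly infinite groups, given as an explicit carrier with operations.
   Subgroups are predicates on the carrier (T -> Prop). *)
From mathcomp Require Import all_boot.

Set Implicit Arguments.
Unset Strict Implicit.
Unset Printing Implicit Defensive.

Record Grp := {
  gT :> Type;
  gmul : gT -> gT -> gT;
  gone : gT;
  ginv : gT -> gT;
  gmulA : forall x y z, gmul x (gmul y z) = gmul (gmul x y) z;
  gmul1 : forall x, gmul gone x = x;
  gmulV : forall x, gmul (ginv x) x = gone
}.

Section Defs.
Variable G : Grp.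
Local Notation T := (gT G).
Local Notation "x * y" := (gmul x y).
Local Notation e := (@gone G).

Fixpoint gexp (x : T) (n : nat) : T :=
  match n with 0 => e | n'.+1 => gexp x n' * x end.

Fixpoint gprod (f : nat -> T) (m : nat) : T :=
  match m with 0 => e | m'.+1 => gprod f m' * f m' end.

Definition subgroup (H : T -> Prop) : Prop :=
  H e /\ (forall x y, H x -> H y -> H (x * y)) /\ (forall x, H x -> H (ginv x)).

Definition sub_set (H K : T -> Prop) : Prop := forall x, H x -> K x.

Definition normal (H : T -> Prop) : Prop :=
  forall g h, H h -> H (ginv g * (h * g)).

Definition abelian (H : T -> Prop) : Prop :=
  forall x y, H x -> H y -> x * y = y * x.

Definition p_group (p : nat) : Prop :=
  forall g : T, exists k, gexp g (p ^ k) = e.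

Definition centralizer (A : T -> Prop) : T -> Prop :=
  fun g => forall a, A a -> g * a = a * g.

Definition finite_set (X : T -> Prop) : Prop :=
  exists n (f : nat -> T), forall x, X x -> exists2 i, i < n & x = f i.

Definition finite_index_in (K H : T -> Prop) : Prop :=
  exists n (t : nat -> T), (forall i, i < n -> H (t i)) /\
    forall h, H h -> exists2 i, i < n & K (ginv (t i) * h).

Definition divisible (D : T -> Prop) : Prop :=
  forall d n, D d -> 0 < n -> exists2 e, D e & gexp e n = d.

Definition quasicyclic (P : T -> Prop) : Prop :=
  exists q (x : nat -> T), prime q /\ x 0 = e /\ x 1 <> e /\
    (forall n, gexp (x n.+1) q = x n) /\
    (forall g, P g <-> exists n k, g = gexp (x n) k).

Definition direct_product (H : T -> Prop) (P : nat -> T -> Prop) (m : nat) : Prop :=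
  (forall i, i < m -> subgroup (P i)) /\
  (forall i j x y, i < m -> j < m -> i <> j -> P i x -> P j y -> x * y = y * x) /\
  (forall g, H g <-> exists f : nat -> T,
       (forall i, i < m -> P i (f i)) /\ g = gprod f m) /\
  (forall f f' : nat -> T, (forall i, i < m -> P i (f i)) ->
       (forall i, i < m -> P i (f' i)) -> gprod f m = gprod f' m ->
       forall i, i < m -> f i = f' i).

Definition chernikov (H : T -> Prop) : Prop :=
  subgroup H /\
  exists K : T -> Prop, subgroup K /\ sub_set K H /\
    (forall h k, H h -> K k -> K (ginv h * (k * h))) /\
    finite_index_in K H /\
    exists (m : nat) (P : nat -> T -> Prop),
      (forall i, i < m -> quasicyclic (P i)) /\ direct_product K P m.

End Defs.

(* By Zorn's lemma choose a subgroup S0 of A maximal among those meeting D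
   trivially.  Then A = S0 D: otherwise, since A is a p-group and D is
   divisible, correcting a suitable p-power of an element outside S0 D by a
   p-th root taken in D yields b outside S0 D with b^p in S0, and S0<b> still
   meets D trivially.  Let rho be the projection of A onto D along S0 and
   t_1, ..., t_n a transversal of C_G(A) in G.  Conjugating rho by an element
   of C_G(A) does not change it, so the average
     r(a) = prod_i t_i rho(t_i^-1 a t_i) t_i^-1
   does not depend on the representatives and is therefore a G-equivariant
   homomorphism from A to D with r(d) = d^n on D.  Its kernel S is
   G-invariant, A = S D because D is divisible, and S meets D inside the
   n-torsion of D, which is finite since D is Chernikov. *)

From mathcomp Require Import all_boot.
From HB Require Import structures.
From mathcomp Require Import boolp classical_sets.

Set Implicit Arguments.
Unset Strict Implicit.
Unset Printing Implicit Defensive.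

Section GroupFacts.
Variable G : Grp.
Local Notation "x * y" := (@gmul G x y).
Local Notation e := (@gone G).
Local Notation inv := (@ginv G).

Lemma mulgV (x : G) : x * inv x = e.
Proof.
have VVx := gmulV (inv x).
by rewrite -[x * inv x]gmul1 -VVx -gmulA [inv x * (x * inv x)]gmulA gmulV gmul1.
Qed.

Lemma mulg1 (x : G) : x * e = x.
Proof. by rewrite -(gmulV x) gmulA mulgV gmul1. Qed.

Lemma mulKg (x y : G) : inv x * (x * y) = y.
Proof. by rewrite gmulA gmulV gmul1. Qed.

Lemma mulKVg (x y : G) : x * (inv x * y) = y.
Proof. by rewrite gmulA mulgV gmul1. Qed.

Lemma mulgK (x y : G) : (y * x) * inv x = y.
Proof. by rewrite -gmulA mulgV mulg1. Qed.

Lemma mulgKV (x y : G) : (y * inv x) * x = y.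
Proof. by rewrite -gmulA gmulV mulg1. Qed.

Lemma invg_uniq (x y : G) : x * y = e -> y = inv x.
Proof. by move=> xy1; rewrite -[y](mulKg x) xy1 mulg1. Qed.

Lemma invgK (x : G) : inv (inv x) = x.
Proof. by symmetry; apply: invg_uniq; rewrite gmulV. Qed.

Lemma invMg (x y : G) : inv (x * y) = inv y * inv x.
Proof. by symmetry; apply: invg_uniq; rewrite -gmulA mulKVg mulgV. Qed.

Lemma invg1 : inv e = e.
Proof. by symmetry; apply: invg_uniq; rewrite gmul1. Qed.

Lemma gexpD (x : G) m n : gexp x (m + n) = gexp x m * gexp x n.
Proof. by elim: n => [|n IH]; rewrite ?addn0 ?mulg1 // addnS /= IH gmulA. Qed.

Lemma gexp1 (x : G) : gexp x 1 = x.
Proof. exact: gmul1. Qed.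

Lemma gexpS (x : G) n : gexp x n.+1 = x * gexp x n.
Proof. by rewrite -add1n gexpD gexp1. Qed.

Lemma gexpM (x : G) m n : gexp x (m * n) = gexp (gexp x m) n.
Proof. by elim: n => [|n IH]; rewrite ?muln0 // mulnS gexpD IH -gexpS. Qed.

Lemma gexp1n n : gexp e n = e.
Proof. by elim: n => //= n ->; rewrite gmul1. Qed.

Lemma commute_gexp (x y : G) n : x * y = y * x -> gexp x n * y = y * gexp x n.
Proof.
move=> cxy; elim: n => [|n IH] /=; first by rewrite gmul1 mulg1.
by rewrite -gmulA cxy gmulA IH gmulA.
Qed.

Lemma gexpMn (x y : G) n : x * y = y * x -> gexp (x * y) n = gexp x n * gexp y n.
Proof.
move=> cxy; elim: n => [|n IH] /=; first by rewrite gmul1.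
by rewrite IH -!gmulA [gexp y n * (x * y)]gmulA (commute_gexp n (esym cxy)) !gmulA.
Qed.

Lemma gexpVn (x : G) n : gexp (inv x) n = inv (gexp x n).
Proof. by apply: invg_uniq; rewrite -gexpMn ?mulgV ?gmulV ?gexp1n. Qed.

Lemma invg_gexp (x : G) n : 0 < n -> gexp x n = e -> inv x = gexp x n.-1.
Proof. by case: n => // n _ xn1; symmetry; apply: invg_uniq; rewrite -gexpS. Qed.

Section Subgroup.
Variable H : G -> Prop.
Hypothesis sH : subgroup H.

Lemma subgroup1 : H e.
Proof. by case: sH => []. Qed.

Lemma subgroupM x y : H x -> H y -> H (x * y).
Proof. by case: sH => _ [+ _]; apply. Qed.

Lemma subgroupV x : H x -> H (inv x).
Proof. by case: sH => _ [_]; apply. Qed.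

Lemma subgroupX x n : H x -> H (gexp x n).
Proof. by move=> Hx; elim: n => [|n IH] /=; [exact: subgroup1|exact: subgroupM]. Qed.

Lemma subgroup_gexp_gcd x m n :
  H (gexp x m) -> H (gexp x n) -> H (gexp x (gcdn m n)).
Proof.
case: (posnP m) => [->|m_gt0] Hxm Hxn; first by rewrite gcd0n.
have [a _ /dvdnP[k gcd_eq]] := Bezoutl n m_gt0.
have -> : gexp x (gcdn m n) = gexp (gexp x m) k * inv (gexp (gexp x n) a).
  by rewrite -!gexpM [(m * k)%N]mulnC [(n * a)%N]mulnC -gcd_eq gexpD mulgK.
by apply: subgroupM; [exact: subgroupX | apply/subgroupV/subgroupX].
Qed.

End Subgroup.

Lemma subgroup_trivial : subgroup (fun x : G => x = e).
Proof. by split=> //; split=> [x y -> ->|x ->]; rewrite ?gmul1 ?invg1. Qed.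

Lemma gexp_gcd x m n : gexp x m = e -> gexp x n = e -> gexp x (gcdn m n) = e.
Proof. exact: (subgroup_gexp_gcd subgroup_trivial). Qed.

Definition conjg (x g : G) := inv g * (x * g).

Lemma conjgM x y g : conjg (x * y) g = conjg x g * conjg y g.
Proof. by rewrite /conjg -!gmulA mulKVg. Qed.

Lemma conjgJ x g h : conjg (conjg x g) h = conjg x (g * h).
Proof. by rewrite /conjg invMg !gmulA. Qed.

Lemma conjgK x g : conjg (conjg x g) (inv g) = x.
Proof. by rewrite conjgJ mulgV /conjg invg1 gmul1 mulg1. Qed.

Lemma conjg1 g : conjg e g = e.
Proof. by rewrite /conjg gmul1 gmulV. Qed.

Lemma subgroup_centralizer (A : G -> Prop) : subgroup (centralizer A).
Proof.
split=> [a _ | ]; first by rewrite gmul1 mulg1.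
split=> [x y Cx Cy a Aa | x Cx a Aa]; first by rewrite -gmulA Cy // !gmulA Cx.
by rewrite -{1}(mulgK x a) -Cx // gmulA mulKg.
Qed.

Lemma conjg_centralizer (A : G -> Prop) c y : centralizer A c -> A y -> conjg y c = y.
Proof. by move=> Cc Ay; rewrite /conjg -Cc // mulKg. Qed.

End GroupFacts.

Section FiniteSets.
Variable G : Grp.
Local Notation "x * y" := (@gmul G x y).
Local Notation e := (@gone G).

Definition prodset (X Y : G -> Prop) : G -> Prop :=
  fun z => exists x y, X x /\ Y y /\ z = x * y.

Lemma finite_subset (X Y : G -> Prop) : finite_set Y -> sub_set X Y -> finite_set X.
Proof. by move=> [n [f Yf]] XY; exists n, f => x /XY /Yf. Qed.

Lemma finite_set0 (X : G -> Prop) : (forall x, ~ X x) -> finite_set X.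
Proof. by move=> X0; exists 0, (fun _ => e) => x /X0. Qed.

Lemma finite_set1 (x0 : G) : finite_set (fun x => x = x0).
Proof. by exists 1, (fun _ => x0) => x ->; exists 0. Qed.

Lemma finite_setU (X Y : G -> Prop) : finite_set X -> finite_set Y ->
  finite_set (fun x => X x \/ Y x).
Proof.
move=> [n1 [f1 Xf1]] [n2 [f2 Yf2]].
exists (n1 + n2), (fun i => if i < n1 then f1 i else f2 (i - n1)).
move=> x [/Xf1 [i lt_i_n1 ->]|/Yf2 [i lt_i_n2 ->]].
  by exists i; rewrite ?lt_i_n1 // ltn_addr.
by exists (n1 + i); rewrite ?ltn_add2l // ltnNge leq_addr addKn.
Qed.

Lemma finite_bigcup N (X : nat -> G -> Prop) :
  (forall j, j < N -> finite_set (X j)) -> finite_set (fun x => exists2 j, j < N & X j x).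
Proof.
elim: N => [|N IH] finX; first by apply: finite_set0 => x [].
apply: (@finite_subset _ (fun x => (exists2 j, j < N & X j x) \/ X N x)).
  by apply: finite_setU; [apply: IH => j /ltnW/finX | exact: finX].
move=> x [j]; rewrite ltnS leq_eqVlt => /orP [/eqP -> | lt_j_N] Xjx; first by right.
by left; exists j.
Qed.

Lemma finite_prodset (X Y : G -> Prop) : finite_set X -> finite_set Y ->
  finite_set (prodset X Y).
Proof.
move=> [n1 [f1 Xf1]] [n2 [f2 Yf2]].
exists (n1 * n2.+1)%N, (fun i => f1 (i %/ n2.+1) * f2 (i %% n2.+1)).
move=> z [x [y [/Xf1 [a lt_a_n1 ->] [/Yf2 [b lt_b_n2 ->] ->]]]].
exists (a * n2.+1 + b)%N.
  apply: (@leq_trans (a.+1 * n2.+1)%N); first by rewrite mulSn addnC ltn_add2r ltnS ltnW.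
  by rewrite leq_mul2r lt_a_n1 orbT.
by rewrite divnMDl // modnMDl divn_small ?addn0 ?modn_small // ltnS ltnW.
Qed.

End FiniteSets.

Section Products.
Variable G : Grp.
Local Notation "x * y" := (@gmul G x y).
Local Notation e := (@gone G).

Lemma eq_gprod (f g : nat -> G) m :
  (forall i, i < m -> f i = g i) -> gprod f m = gprod g m.
Proof. by elim: m => [|m IH] //= fg; rewrite IH ?fg // => i /ltnW/fg. Qed.

Lemma gprod1 m : gprod (fun _ => e) m = e.
Proof. by elim: m => //= m ->; rewrite gmul1. Qed.

Lemma gprod_const (x : G) m : gprod (fun _ => x) m = gexp x m.
Proof. by elim: m => //= m ->. Qed.

Lemma gprod_delta m i (y : G) : i < m -> gprod (fun j => if j == i then y else e) m = y.
Proof.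
elim: m => [|m IH] //=; rewrite ltnS leq_eqVlt => /orP [/eqP -> | lt_i_m].
  by rewrite eqxx (@eq_gprod _ (fun _ => e)) ?gprod1 ?gmul1 // => j /ltn_eqF ->.
by rewrite IH // (gtn_eqF lt_i_m) mulg1.
Qed.

Lemma conjg_gprod (f : nat -> G) g m :
  gprod (fun i => conjg (f i) g) m = conjg (gprod f m) g.
Proof. by elim: m => [|m IH] /=; rewrite ?conjg1 // IH conjgM. Qed.

Lemma subgroup_gprod (H : G -> Prop) (f : nat -> G) m : subgroup H ->
  (forall i, i < m -> H (f i)) -> H (gprod f m).
Proof.
move=> sH; elim: m => [|m IH] Hf /=; first exact: subgroup1.
by apply: subgroupM => //; [apply: IH => i /ltnW/Hf | exact: Hf].
Qed.

Lemma finite_gprod (X : nat -> G -> Prop) m : (forall i, i < m -> finite_set (X i)) ->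
  finite_set (fun z => exists f, (forall i, i < m -> X i (f i)) /\ z = gprod f m).
Proof.
elim: m => [|m IH] finX.
  by apply: finite_subset (finite_set1 e) _ => z [f [_ ->]].
apply: finite_subset (finite_prodset (IH _) (finX m _)) _ => [i /ltnW/finX //|//|].
move=> z [f [Xf ->]]; exists (gprod f m), (f m); split; last by split=> //; exact: Xf.
by exists f; split=> // i /ltnW/Xf.
Qed.

End Products.

Section AbelianProducts.
Variables (G : Grp) (A : G -> Prop).
Local Notation "x * y" := (@gmul G x y).
Hypotheses (sA : subgroup A) (abA : abelian A).

Lemma gexp_gprod (f : nat -> G) m n : (forall i, i < m -> A (f i)) ->
  gexp (gprod f m) n = gprod (fun i => gexp (f i) n) m.
Proof.
elim: m => [|m IH] Af /=; first exact: gexp1n.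
have Af' i : i < m -> A (f i) by move/ltnW/Af.
rewrite gexpMn ?IH //.
by apply: abA; [exact: subgroup_gprod | exact: Af].
Qed.

Lemma gprodM (f g : nat -> G) m :
  (forall i, i < m -> A (f i)) -> (forall i, i < m -> A (g i)) ->
  gprod (fun i => f i * g i) m = gprod f m * gprod g m.
Proof.
elim: m => [|m IH] Af Ag /=; first by rewrite gmul1.
have Af' i : i < m -> A (f i) by move/ltnW/Af.
have Ag' i : i < m -> A (g i) by move/ltnW/Ag.
rewrite IH // -!gmulA; congr (_ * _); rewrite !gmulA; congr (_ * _).
by apply: abA; [exact: subgroup_gprod | exact: Af].
Qed.

(* Products of elements of A are bigops of the commutative monoid {x | A x},
   so that the reindexing lemmas of bigop apply to them. *)
Let elt := {x : G | A x}.
Let elt_mul (x y : elt) : elt := exist _ _ (subgroupM sA (svalP x) (svalP y)).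
Let elt_one : elt := exist _ _ (subgroup1 sA).
Let elt_eq (x y : elt) : sval x = sval y -> x = y.
Proof. by case: x y => x Ax [y Ay] /= xy; exact: eq_exist. Qed.
Let elt_mulA : associative elt_mul.
Proof. by move=> x y z; apply: elt_eq; rewrite /= gmulA. Qed.
Let elt_mulC : commutative elt_mul.
Proof. by move=> x y; apply: elt_eq; exact: abA (svalP x) (svalP y). Qed.
Let elt_mul1 : left_id elt_one elt_mul.
Proof. by move=> x; apply: elt_eq; apply: gmul1. Qed.

HB.instance Definition _ := Monoid.isComLaw.Build elt elt_one elt_mul
  elt_mulA elt_mulC elt_mul1.

Let gprod_big (f : nat -> G) m (Af : forall i, i < m -> A (f i)) :
  gprod f m = sval (\big[elt_mul/elt_one]_(i < m) exist _ (f i) (Af i (ltn_ord i))).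
Proof.
elim: m Af => [|m IH] Af; first by rewrite big_ord0.
rewrite big_ord_recr /= (IH (fun i lt_i_m => Af i (ltnW lt_i_m))).
by congr (_ * _); congr sval; apply: eq_bigr => i _; exact: elt_eq.
Qed.

Lemma gprod_perm (f : nat -> G) (s : nat -> nat) m : (forall i, i < m -> A (f i)) ->
  (forall i, i < m -> s i < m) ->
  (forall i j, i < m -> j < m -> s i = s j -> i = j) ->
  gprod (fun i => f (s i)) m = gprod f m.
Proof.
move=> Af s_lt s_inj.
have Afs i : i < m -> A (f (s i)) by move/s_lt/Af.
rewrite (gprod_big Afs) (gprod_big Af); congr sval.
pose h (i : 'I_m) := Ordinal (s_lt i (ltn_ord i)).
have h_inj : injective h.
  by move=> i j /(congr1 val) /(s_inj _ _ (ltn_ord i) (ltn_ord j)) /val_inj.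
by rewrite [RHS](reindex_inj h_inj); apply: eq_bigr => i _; exact: elt_eq.
Qed.

End AbelianProducts.

Section Torsion.
Variable G : Grp.
Local Notation "x * y" := (@gmul G x y).
Local Notation e := (@gone G).
Local Notation inv := (@ginv G).

Definition torsion (X : G -> Prop) n : G -> Prop := fun x => X x /\ gexp x n = e.

Section Quasicyclic.
Variables (q : nat) (x : nat -> G).
Hypotheses (q_pr : prime q) (x0 : x 0 = e) (x1 : x 1 <> e)
  (xS : forall n, gexp (x n.+1) q = x n).

Lemma gexp_quasi_gen a l : gexp (x (l + a)) (q ^ l) = x a.
Proof.
elim: l => [|l IH]; first by rewrite gexp1.
by rewrite addSn expnS gexpM xS IH.
Qed.

Lemma quasi_gen_order j m : gexp (x j) m = e <-> q ^ j %| m.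
Proof.
have xj1 : gexp (x j) (q ^ j) = e by rewrite -[j in x j]addn0 gexp_quasi_gen.
split=> [xjm1 | /dvdnP [k ->]]; last by rewrite mulnC gexpM xj1 gexp1n.
have /(dvdn_pfactor _ _ q_pr) [i le_i_j gcd_eq] := dvdn_gcdr m (q ^ j).
have := gexp_gcd xjm1 xj1; rewrite gcd_eq => xji1.
have [lt_i_j | le_j_i] := ltnP i j.
  have xji_1 : x (j - i) = e by rewrite -(gexp_quasi_gen (j - i) i) subnKC // ltnW.
  have ji_gt0 : 0 < j - i by rewrite subn_gt0.
  by case: x1; rewrite -(gexp_quasi_gen 1 (j - i).-1) addn1 prednK // xji_1 gexp1n.
have -> : j = i by apply/eqP; rewrite eqn_leq le_j_i le_i_j.
by rewrite -gcd_eq dvdn_gcdl.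
Qed.

Lemma quasi_torsion_cyclic n j k : 0 < n -> gexp (gexp (x j) k) n = e ->
  exists2 t, t < q ^ logn q n & gexp (x j) k = gexp (x (logn q n)) t.
Proof.
set a := logn q n => n_gt0 /esym; rewrite -gexpM => /esym /quasi_gen_order q_dvd.
have q_gt0 := prime_gt0 q_pr.
have xa1 : gexp (x a) (q ^ a) = e by apply/quasi_gen_order.
have [t0 ->] : exists t0, gexp (x j) k = gexp (x a) t0.
  have [le_j_a | lt_a_j] := leqP j a.
    by exists (q ^ (a - j) * k)%N; rewrite gexpM -(gexp_quasi_gen j (a - j)) subnK.
  case: (posnP k) => [-> | k_gt0]; first by exists 0.
  move: q_dvd; rewrite pfactor_dvdn ?muln_gt0 ?k_gt0 // lognM // -/a => le_j.
  have /dvdnP [t ->] : q ^ (j - a) %| k by rewrite pfactor_dvdn // leq_subLR addnC.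
  by exists t; rewrite mulnC gexpM -{1}(subnK (ltnW lt_a_j)) gexp_quasi_gen.
exists (t0 %% q ^ a); first by rewrite ltn_mod expn_gt0 q_gt0.
by rewrite {1}(divn_eq t0 (q ^ a)) gexpD mulnC gexpM xa1 gexp1n gmul1.
Qed.

End Quasicyclic.

Lemma quasicyclic_torsion_finite (P : G -> Prop) n : 0 < n -> quasicyclic P ->
  finite_set (torsion P n).
Proof.
move=> n_gt0 [q [x [q_pr [x0 [x1 [xS Pgen]]]]]].
exists (q ^ logn q n), (gexp (x (logn q n))) => _ [/Pgen [j [k ->]] yn1].
exact: quasi_torsion_cyclic.
Qed.

Lemma direct_product_torsion_finite (K : G -> Prop) (P : nat -> G -> Prop) m n :
  subgroup K -> abelian K -> direct_product K P m ->
  (forall i, i < m -> finite_set (torsion (P i) n)) -> finite_set (torsion K n).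
Proof.
move=> sK abK [sP [_ [Kgen Kuniq]]] finP.
have PK i y : i < m -> P i y -> K y.
  move=> lt_i_m Piy; apply/Kgen; exists (fun j => if j == i then y else e).
  split; last by rewrite gprod_delta.
  by move=> j /sP sPj; case: eqP => [-> // | _]; exact: subgroup1.
apply: finite_subset (finite_gprod finP) _ => k [/Kgen [f [Pf ->]] fn1].
exists f; split=> // i lt_i_m; split; first exact: Pf.
have Pfn j : j < m -> P j (gexp (f j) n).
  by move=> lt_j_m; exact: (subgroupX (sP j lt_j_m) n (Pf j lt_j_m)).
apply: (Kuniq (fun j => gexp (f j) n) (fun _ => e)) => // [j /sP/subgroup1 // |].
by rewrite gprod1 -(gexp_gprod sK abK) // => j lt_j_m; exact: PK lt_j_m (Pf j lt_j_m).
Qed.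

Lemma finite_index_torsion_finite (D K : G -> Prop) n :
  subgroup D -> abelian D -> subgroup K -> finite_index_in K D ->
  finite_set (torsion K n) -> finite_set (torsion D n).
Proof.
move=> sD abD sK [N [u [_ cosets]]] finK.
pose coset_torsion j x := torsion D n x /\ K (inv (u j) * x).
apply: (@finite_subset _ _ (fun x => exists2 j, j < N & coset_torsion j x)).
  apply: finite_bigcup => j _.
  have [[x0 [[Dx0 x0n1] Kx0]] | empty] := pselect (exists x0, coset_torsion j x0).
    apply: finite_subset (finite_prodset (finite_set1 x0) finK) _.
    move=> x [[Dx xn1] Kx]; exists x0, (inv x0 * x).
    split=> //; split; last by rewrite mulKVg.
    split.
      have -> : inv x0 * x = inv (inv (u j) * x0) * (inv (u j) * x).
        by rewrite invMg invgK -gmulA mulKVg.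
      exact: (subgroupM sK (subgroupV sK Kx0) Kx).
    rewrite gexpMn ?gexpVn ?x0n1 ?xn1 ?invg1 ?gmul1 //.
    exact: abD _ _ (subgroupV sD Dx0) Dx.
  by apply: finite_set0 => x Cx; apply: empty; exists x.
by move=> x [Dx xn1]; have [j lt_j_N Kx] := cosets x Dx; exists j.
Qed.

Lemma chernikov_torsion_finite (D : G -> Prop) n : 0 < n -> abelian D -> chernikov D ->
  finite_set (torsion D n).
Proof.
move=> n_gt0 abD [sD [K [sK [KD [_ [fiK [m [P [Pquasi dpK]]]]]]]]].
apply: (finite_index_torsion_finite sD abD sK fiK).
apply: (direct_product_torsion_finite sK _ dpK) => [x y Kx Ky | i lt_i_m].
  by apply: abD; apply: KD.
exact: quasicyclic_torsion_finite (Pquasi i lt_i_m).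
Qed.

End Torsion.

Section Complement.
Variable G : Grp.
Local Notation "x * y" := (@gmul G x y).
Local Notation e := (@gone G).
Local Notation inv := (@ginv G).

Definition trivial_meet (X Y : G -> Prop) := forall x, X x -> Y x -> x = e.

Definition cycle (b : G) : G -> Prop := fun y => exists k, y = gexp b k.

Lemma subgroup_cycle b N : 0 < N -> gexp b N = e -> subgroup (cycle b).
Proof.
move=> N_gt0 bN1; split; first by exists 0.
split=> [_ _ [k ->] [l ->] | _ [k ->]]; first by exists (k + l)%N; rewrite gexpD.
by exists (N.-1 * k)%N; rewrite -gexpVn gexpM (invg_gexp N_gt0).
Qed.

Lemma subgroup_gexp_coprime (X : G -> Prop) b r m : subgroup X -> coprime r m ->
  X (gexp b r) -> X (gexp b m) -> X b.
Proof.
move=> sX /eqP co_rm Xbr Xbm.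
by have := subgroup_gexp_gcd sX Xbr Xbm; rewrite co_rm gexp1.
Qed.

Lemma exists_last_outside (X : G -> Prop) a p j : ~ X a -> X (gexp a (p ^ j)) ->
  exists i, ~ X (gexp a (p ^ i)) /\ X (gexp a (p ^ i.+1)).
Proof.
move=> Xa; elim: j => [|j IH] Xaj; first by rewrite expn0 gexp1 in Xaj.
by have [/IH | ] := pselect (X (gexp a (p ^ j))); last exists j.
Qed.

Local Open Scope classical_set_scope.

Lemma maximal_trivial_meet (A D : G -> Prop) : subgroup A -> subgroup D ->
  exists S, subgroup S /\ sub_set S A /\ trivial_meet S D /\
    forall B, subgroup B -> sub_set B A -> trivial_meet B D -> sub_set S B -> sub_set B S.
Proof.
move=> sA sD.
(* P does not require X e: the union of the empty chain, which is empty, must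
   satisfy P. *)
pose P X := [/\ sub_set X A, trivial_meet X D,
  forall x y, X x -> X y -> X (x * y) & forall x, X x -> X (inv x)].
have [S [[SA SD SM SV] maxS]] : exists S, P S /\ forall B, S `<` B -> ~ P B.
  apply: Zorn_bigcup => F FP Ftot; split.
  - by move=> x [X /FP [XA _ _ _] /XA].
  - by move=> x [X /FP [_ XD _ _] /XD].
  - move=> x y [X FX Xx] [Y FY Yy].
    have [XY | YX] := Ftot X Y FX FY.
    + by exists Y => //; have [_ _ YM _] := FP Y FY; exact: YM (XY _ Xx) Yy.
    + by exists X => //; have [_ _ XM _] := FP X FX; exact: XM Xx (YX _ Yy).
  - by move=> x [X FX Xx]; exists X => //; have [_ _ _ XV] := FP X FX; exact: XV.
have S_max B : P B -> sub_set S B -> sub_set B S.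
  by move=> PB SB; apply: contrapT => BS; exact: maxS B (conj SB BS) PB.
have Se : S e.
  have PSe : P (fun x => S x \/ x = e).
    split=> [x [/SA // | ->] | x [/SD // | -> //] | x y | x [/SV Sx | ->]].
    - exact: subgroup1.
    - case=> [Sx | ->] [Sy | ->]; rewrite ?gmul1 ?mulg1; last by right.
      + by left; exact: SM.
      + by left.
      + by left.
    - by left.
    - by right; rewrite invg1.
  by apply: (S_max _ PSe) => [x Sx | ]; [left | right].
exists S; split; first by split=> //; split.
split=> //; split=> // B sB BA BD; apply: S_max; split=> // x y.
- exact: subgroupM.
- exact: subgroupV.
Qed.

Section PGroup.
Variables (A D : G -> Prop) (p : nat).
Hypotheses (p_pr : prime p) (pA : forall a, A a -> exists k, gexp a (p ^ k) = e)
  (sA : subgroup A) (abA : abelian A) (sD : subgroup D) (DA : sub_set D A)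
  (divD : divisible D).

Lemma subgroup_prodset (S T : G -> Prop) : subgroup S -> subgroup T ->
  sub_set S A -> sub_set T A -> subgroup (prodset S T).
Proof.
move=> sS sT SA TA; split.
  exists e, e; rewrite gmul1; split; first exact: (subgroup1 sS).
  by split; first exact: (subgroup1 sT).
split=> [_ _ [s [t [Ss [Tt ->]]]] [s' [t' [Ss' [Tt' ->]]]] | _ [s [t [Ss [Tt ->]]]]].
  exists (s * s'), (t * t'); split; first exact: (subgroupM sS Ss Ss').
  split; first exact: (subgroupM sT Tt Tt').
  by rewrite -!gmulA (gmulA t) (abA (TA _ Tt) (SA _ Ss')) !gmulA.
exists (inv s), (inv t); split; first exact: (subgroupV sS Ss).
split; first exact: (subgroupV sT Tt).
by rewrite invMg; exact: abA (TA _ (subgroupV sT Tt)) (SA _ (subgroupV sS Ss)).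
Qed.

Lemma outside_prodset_pth_root S a : subgroup S -> sub_set S A -> A a ->
  ~ prodset S D a -> exists b, A b /\ S (gexp b p) /\ ~ prodset S D b.
Proof.
move=> sS SA Aa SDa.
have sSD := subgroup_prodset sS sD SA DA.
have [j aj1] := pA Aa.
have [i [SDa' SDa'p]] : exists i, ~ prodset S D (gexp a (p ^ i)) /\
    prodset S D (gexp a (p ^ i.+1)).
  by apply: (@exists_last_outside _ a p j SDa); rewrite aj1; exact: subgroup1.
set a' := gexp a (p ^ i) in SDa' SDa'p.
have Aa' : A a' by exact: subgroupX.
move: SDa'p; rewrite expnSr gexpM -/a' => -[s [d [Ss [Dd a'p]]]].
have [c Dc cp] := divD Dd (prime_gt0 p_pr).
have Ac := DA Dc.
exists (a' * inv c); split; first exact: (subgroupM sA Aa' (subgroupV sA Ac)).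
split.
  rewrite gexpMn; last exact: abA Aa' (subgroupV sA Ac).
  by rewrite gexpVn cp a'p mulgK.
move=> SDb; apply: SDa'.
rewrite -(mulgKV c a'); apply: (subgroupM sSD SDb).
by exists e, c; split; [exact: (subgroup1 sS) | rewrite gmul1].
Qed.

Lemma trivial_meet_adjoin S b : subgroup S -> sub_set S A -> trivial_meet S D ->
  S (gexp b p) -> ~ prodset S D b -> trivial_meet (prodset S (cycle b)) D.
Proof.
move=> sS SA SD Sbp SDb _ [s [_ [Ss [[k ->] ->]]]].
set r := k %% p.
have [s1 Ss1 ->] : exists2 s1, S s1 & s * gexp b k = s1 * gexp b r.
  exists (s * gexp (gexp b p) (k %/ p)).
    exact: (subgroupM sS Ss (subgroupX sS _ Sbp)).
  by rewrite -gmulA -gexpM -gexpD mulnC -divn_eq.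
have [r0 | r_gt0] := posnP r; first by rewrite r0 mulg1; exact: SD.
move=> Dx; case: SDb.
apply: (@subgroup_gexp_coprime _ b r p (subgroup_prodset sS sD SA DA)).
- rewrite coprime_sym prime_coprime //; apply/negP => /(dvdn_leq r_gt0).
  by rewrite leqNgt ltn_mod prime_gt0.
- by exists (inv s1), (s1 * gexp b r); split; [exact: (subgroupV sS) | rewrite mulKg].
- by exists (gexp b p), e; split=> //; split; [exact: (subgroup1 sD) | rewrite mulg1].
Qed.

Lemma divisible_complement : exists S, subgroup S /\ sub_set S A /\ trivial_meet S D /\
  forall a, A a -> prodset S D a.
Proof.
have [S [sS [SA [SD maxS]]]] := maximal_trivial_meet sA sD.
exists S; do 3!split=> //.
move=> a Aa; apply: contrapT => SDa.
have [b [Ab [Sbp SDb]]] := outside_prodset_pth_root sS SA Aa SDa.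
have [k bk1] := pA Ab.
have sB : subgroup (prodset S (cycle b)).
  apply: subgroup_prodset => //.
    by apply: (subgroup_cycle _ bk1); rewrite expn_gt0 prime_gt0.
  by move=> _ [l ->]; exact: subgroupX.
have BA : sub_set (prodset S (cycle b)) A.
  by move=> _ [s [_ [Ss [[l ->] ->]]]]; exact: (subgroupM sA (SA _ Ss) (subgroupX sA l Ab)).
have SB : sub_set S (prodset S (cycle b)).
  by move=> s Ss; exists s, e; split=> //; split; [exists 0 | rewrite mulg1].
have Sb : S b.
  apply: (maxS _ sB BA (trivial_meet_adjoin sS SA SD Sbp SDb) SB).
  exists e, b; split; first exact: (subgroup1 sS).
  by split; [exists 1; rewrite gexp1 | rewrite gmul1].
by apply: SDb; exists b, e; split=> //; split; [exact: (subgroup1 sD) | rewrite mulg1].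
Qed.

End PGroup.
End Complement.

Section Projection.
Variables (G : Grp) (A S D : G -> Prop).
Local Notation "x * y" := (@gmul G x y).
Local Notation e := (@gone G).
Local Notation inv := (@ginv G).
Hypotheses (sA : subgroup A) (abA : abelian A) (sS : subgroup S) (sD : subgroup D)
  (SA : sub_set S A) (DA : sub_set D A) (SD : trivial_meet S D)
  (ASD : forall a, A a -> prodset S D a).

Lemma prodset_uniq s d s' d' : S s -> D d -> S s' -> D d' -> s * d = s' * d' -> d = d'.
Proof.
move=> Ss Dd Ss' Dd' sd_eq.
have s's_eq : inv s' * s = d' * inv d by rewrite -(mulgK d s) sd_eq gmulA mulKg.
have d'd1 : d' * inv d = e.
  rewrite -s's_eq; apply: SD; first exact: (subgroupM sS (subgroupV sS Ss') Ss).
  by rewrite s's_eq; exact: (subgroupM sD Dd' (subgroupV sD Dd)).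
by rewrite -(mulgKV d d') d'd1 gmul1.
Qed.

Lemma exists_projection : exists rho : G -> G,
  [/\ forall a, A a -> D (rho a),
      forall a b, A a -> A b -> rho (a * b) = rho a * rho b
    & forall d, D d -> rho d = d].
Proof.
have /choice [rho rhoP] : forall a, exists d, A a -> D d /\ exists2 s, S s & a = s * d.
  move=> a; have [Aa | nAa] := pselect (A a); last by exists e.
  by have [s [d [Ss [Dd ->]]]] := ASD Aa; exists d => _; split=> //; exists s.
have rhoD a : A a -> D (rho a) by move/rhoP => [].
exists rho; split=> // [a b Aa Ab | d Dd].
  have [Da [s Ss a_eq]] := rhoP a Aa; have [Db [s' Ss' b_eq]] := rhoP b Ab.
  have [Dab [s'' Ss'' ab_eq]] := rhoP (a * b) (subgroupM sA Aa Ab).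
  symmetry; apply: (prodset_uniq (subgroupM sS Ss Ss') (subgroupM sD Da Db) Ss'' Dab).
  rewrite -ab_eq {2}a_eq {2}b_eq -!gmulA; congr (_ * _); rewrite !gmulA; congr (_ * _).
  exact: abA (SA Ss') (DA Da).
have [_ [s Ss d_eq]] := rhoP d (DA Dd).
by symmetry; apply: (prodset_uniq (subgroup1 sS) Dd Ss (rhoD _ (DA Dd))); rewrite gmul1.
Qed.

End Projection.

Section Transversal.
Variables (G : Grp) (C : G -> Prop).
Local Notation "x * y" := (@gmul G x y).
Local Notation e := (@gone G).
Local Notation inv := (@ginv G).
Hypothesis sC : subgroup C.

Definition covers n (t : nat -> G) := forall h, exists2 i, i < n & C (inv (t i) * h).

Definition transversal n t :=
  covers n t /\ forall i j, i < n -> j < n -> C (inv (t i) * t j) -> i = j.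

Lemma transversal_gt0 n t : transversal n t -> 0 < n.
Proof. by case=> /(_ e) [i lt_i_n _] _; exact: leq_ltn_trans lt_i_n. Qed.

Lemma covers_skip n t i j : covers n.+1 t -> i < n.+1 -> j < n.+1 -> i != j ->
  C (inv (t i) * t j) -> covers n (fun k => if k < j then t k else t k.+1).
Proof.
move=> cov lt_i_n lt_j_n neq_ij Cij h.
have skip k : k < n.+1 -> k != j ->
    exists2 k', k' < n & (if k' < j then t k' else t k'.+1) = t k.
  move=> lt_k_n neq_kj; have [lt_kj | le_jk] := ltnP k j.
    by exists k; [exact: leq_trans lt_kj _ | rewrite lt_kj].
  have lt_jk : j < k by rewrite ltn_neqAle eq_sym neq_kj.
  have k_gt0 : 0 < k by exact: leq_ltn_trans lt_jk.
  exists k.-1; first by rewrite -ltnS prednK.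
  by rewrite ltnNge -ltnS prednK //= lt_jk.
have [k lt_k_n Ck] := cov h.
have [k_j | neq_kj] := eqVneq k j.
  have [k' lt_k' tk'] := skip i lt_i_n neq_ij; exists k' => //=; rewrite tk'.
  rewrite -k_j in Cij; rewrite -(mulKVg (t k) h) gmulA.
  exact: (subgroupM sC Cij Ck).
by have [k' lt_k' tk'] := skip k lt_k_n neq_kj; exists k' => //=; rewrite tk'.
Qed.

Lemma exists_transversal : finite_index_in C (fun _ => True) -> exists n t, transversal n t.
Proof.
case=> N [u [_ cov]]; have {cov} : covers N u by move=> h; exact: cov.
elim: N u => [|N IH] u cov; first by have [] := cov e.
have [[i [j [lt_i_N lt_j_N Cij neq_ij]]] | dis] := pselect (exists i j,
    [/\ i < N.+1, j < N.+1, C (inv (u i) * u j) & i != j]).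
  exact: IH (covers_skip cov lt_i_N lt_j_N neq_ij Cij).
exists N.+1, u; split=> // i j lt_i_N lt_j_N Cij; apply: contrapT => neq_ij.
by apply: dis; exists i, j; split=> //; exact/eqP.
Qed.

End Transversal.

Section Averaging.
Variables (G : Grp) (A D : G -> Prop) (rho : G -> G) (n : nat) (t : nat -> G).
Local Notation "x * y" := (@gmul G x y).
Local Notation e := (@gone G).
Local Notation inv := (@ginv G).
Local Notation C := (centralizer A).
Hypotheses (sA : subgroup A) (abA : abelian A) (nA : normal A)
  (sD : subgroup D) (DA : sub_set D A) (nD : normal D)
  (rhoD : forall a, A a -> D (rho a))
  (rhoM : forall a b, A a -> A b -> rho (a * b) = rho a * rho b)
  (rhoid : forall d, D d -> rho d = d)
  (tr : transversal C n t).

Definition rhoJ g a := conjg (rho (conjg a g)) (inv g).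

Lemma rhoJ_D g a : A a -> D (rhoJ g a).
Proof. by move=> Aa; apply/nD/rhoD/nA. Qed.

Lemma rhoJM g a b : A a -> A b -> rhoJ g (a * b) = rhoJ g a * rhoJ g b.
Proof. by move=> Aa Ab; rewrite /rhoJ conjgM rhoM ?conjgM //; exact: nA. Qed.

Lemma rhoJ_id g d : D d -> rhoJ g d = d.
Proof. by move=> Dd; rewrite /rhoJ rhoid ?conjgK //; exact: nD. Qed.

Lemma rhoJ_centralizer g c a : C c -> A a -> rhoJ (g * c) a = rhoJ g a.
Proof.
move=> Cc Aa; have CVc : C (inv c) := subgroupV (subgroup_centralizer A) Cc.
rewrite /rhoJ -conjgJ (conjg_centralizer Cc (nA g Aa)) invMg -conjgJ.
by rewrite (conjg_centralizer CVc) //; exact/DA/rhoD/nA.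
Qed.

Lemma rhoJ_conj g h a : rhoJ g (conjg a h) = conjg (rhoJ (h * g) a) h.
Proof. by rewrite /rhoJ !conjgJ invMg -gmulA gmulV mulg1. Qed.

Definition average a := gprod (fun i => rhoJ (t i) a) n.

Lemma average_D a : A a -> D (average a).
Proof. by move=> Aa; apply: subgroup_gprod => // i _; exact: rhoJ_D. Qed.

Lemma averageM a b : A a -> A b -> average (a * b) = average a * average b.
Proof.
move=> Aa Ab; rewrite /average -(gprodM sA abA) => [|i _|i _]; [|exact/DA/rhoJ_D..].
by apply: eq_gprod => i _; exact: rhoJM.
Qed.

Lemma average_id d : D d -> average d = gexp d n.
Proof.
by move=> Dd; rewrite /average -gprod_const; apply: eq_gprod => i _; exact: rhoJ_id.
Qed.

Lemma average1 : average e = e.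
Proof. by rewrite average_id ?gexp1n //; exact: subgroup1. Qed.

Lemma averageV a : A a -> average (inv a) = inv (average a).
Proof.
by move=> Aa; apply: invg_uniq; rewrite -averageM ?mulgV ?average1 //; exact: subgroupV.
Qed.

Lemma average_translate h a : A a -> gprod (fun i => rhoJ (h * t i) a) n = average a.
Proof.
move=> Aa; have [cov dis] := tr; have sC := subgroup_centralizer A.
have /choice [s sP] : forall i, exists j, j < n /\ C (inv (t j) * (h * t i)).
  by move=> i; have [j lt_j_n Cj] := cov (h * t i); exists j.
transitivity (gprod (fun i => rhoJ (t (s i)) a) n).
  apply: eq_gprod => i _; have [_ Cs] := sP i.
  by rewrite -{1}(mulKVg (t (s i)) (h * t i)) rhoJ_centralizer.
apply: (gprod_perm sA abA) => [i _ | i _ | i j lt_i_n lt_j_n s_ij].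
- exact/DA/rhoJ_D.
- by case: (sP i).
apply: dis => //; have [_ Ci] := sP i; have [_ Cj] := sP j.
have -> : inv (t i) * t j = inv (inv (t (s i)) * (h * t i)) * (inv (t (s j)) * (h * t j)).
  by rewrite s_ij !invMg invgK -!gmulA mulKVg mulKg.
exact: (subgroupM sC (subgroupV sC Ci) Cj).
Qed.

Lemma average_conj h a : A a -> average (conjg a h) = conjg (average a) h.
Proof.
move=> Aa; rewrite -(average_translate h Aa) -conjg_gprod.
by apply: eq_gprod => i _; exact: rhoJ_conj.
Qed.

Definition average_kernel a := A a /\ average a = e.

Lemma average_kernel_complement : divisible D ->
  [/\ subgroup average_kernel, normal average_kernel,
      forall a, A a <-> prodset average_kernel D a
    & forall x, average_kernel x -> D x -> torsion D n x].
Proof.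
move=> divD; split.
- split; first by split; [exact: subgroup1 | exact: average1].
  split=> [x y [Ax ax1] [Ay ay1] | x [Ax ax1]]; split.
  + exact: subgroupM.
  + by rewrite averageM // ax1 ay1 gmul1.
  + exact: subgroupV.
  + by rewrite averageV // ax1 invg1.
- by move=> g x [Ax ax1]; split; [exact: nA | rewrite average_conj // ax1 conjg1].
- move=> a; split=> [Aa | [s [d [[As _] [Dd ->]]]]]; last exact: (subgroupM sA As (DA Dd)).
  have [d Dd dn] := divD _ _ (average_D Aa) (transversal_gt0 tr).
  have AVd : A (inv d) := subgroupV sA (DA Dd).
  exists (a * inv d), d; split; last by split; rewrite ?mulgKV.
  split; first exact: subgroupM.
  by rewrite averageM // averageV ?(average_id Dd) ?dn ?mulgV //; exact: DA Dd.
- by move=> x [_ ax1] Dx; split=> //; rewrite -average_id.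
Qed.

End Averaging.

Theorem lemma2p5 (p : nat) (G : Grp) (A D : G -> Prop) :
  prime p -> p_group G p ->
  subgroup A -> normal A -> abelian A ->
  finite_index_in (centralizer A) (fun _ => True) ->
  subgroup D -> sub_set D A -> normal D -> divisible D -> chernikov D ->
  exists S : G -> Prop,
    subgroup S /\ sub_set S A /\ normal S /\
    (forall a, A a <-> exists s d, S s /\ D d /\ a = gmul s d) /\
    finite_set (fun x => S x /\ D x).
Proof.
move=> p_pr pG sA nA abA fiC sD DA nD divD chD.
have [S0 [sS0 [S0A [S0D S0gen]]]] :=
  divisible_complement p_pr (fun a _ => pG a) sA abA sD DA divD.
have [rho [rhoD rhoM rhoid]] := exists_projection sA abA sS0 sD S0A DA S0D S0gen.
have [n [t tr]] := exists_transversal (subgroup_centralizer A) fiC.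
have [sK nK ASD KD] := average_kernel_complement sA abA nA sD DA nD rhoD rhoM rhoid tr divD.
exists (average_kernel A rho n t); split=> //; split=> [x [] // |]; split=> //; split=> //.
have abD : abelian D by move=> x y Dx Dy; apply: abA; exact: DA.
apply: finite_subset (chernikov_torsion_finite (transversal_gt0 tr) abD chD) _.
by move=> x [Kx Dx]; exact: KD.
Qed.
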